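(* For every integer $n\geq 1$, $$c_n(231,312 : 231)=c_n(312,231 : 312)=2^{n-1}.$$
   Context: $S_n$ is the symmetric group on $[n]=\{1,\dots,n\}$, and a permutation $\pi\in S_n$ is written in one-line notation $\pi=\pi_1\pi_2\cdots\pi_n$ with $\pi_i=\pi(i)$. For $\tau\in S_k$, $k\le n$, $\pi$ contains $\tau$ if there are indices $i_1<\dots<i_k$ with $\pi_{i_s}>\pi_{i_t}$ iff $\tau_s>\tau_t$ for all $1\le s<t\le k$; otherwise $\pi$ avoids $\tau$. $\pi^2$ denotes the composition $\pi\circ\pi$. For patterns $\sigma_1,\sigma_2,\rho$, $c_n(\sigma_1,\sigma_2 : \rho)$ denotes the number of permutations $\pi\in S_n$ such that $\pi$ avoids both $\sigma_1$ and $\sigma_2$ and $\pi^2$ avoids $\rho$. *)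

From mathcomp Require Import all_boot perm.
Set Implicit Arguments. Unset Strict Implicit. Unset Printing Implicit Defensive.

(* Permutations of [n] are represented as 'S_n (permutations of 'I_n = {0..n-1});
   one-line notation pi_i = pi(i), shifted to 0-based (order preserving shift). *)

Definition contains (n k : nat) (pi : 'S_n) (tau : 'S_k) : bool :=
  [exists idx : {ffun 'I_k -> 'I_n},
    [forall s : 'I_k, forall t : 'I_k, (s < t) ==>
       ((idx s < idx t) && ((pi (idx s) > pi (idx t)) == (tau s > tau t)))]].

Definition avoids (n k : nat) (pi : 'S_n) (tau : 'S_k) : bool := ~~ contains pi tau.

(* The patterns 231 and 312 of S_3 (one-line notation, values shifted by -1). *)
Definition f231 (x : 'I_3) : 'I_3 :=
  match val x with 0 => @Ordinal 3 1 isT | 1 => @Ordinal 3 2 isT | _ => @Ordinal 3 0 isT end.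
Definition f312 (x : 'I_3) : 'I_3 :=
  match val x with 0 => @Ordinal 3 2 isT | 1 => @Ordinal 3 0 isT | _ => @Ordinal 3 1 isT end.
Lemma f231_inj : injective f231.
Proof. by move=> [[|[|[|x]]] Hx] [[|[|[|y]]] Hy] // /(congr1 val) /=; try (move=> H; apply: val_inj). Qed.
Lemma f312_inj : injective f312.
Proof. by move=> [[|[|[|x]]] Hx] [[|[|[|y]]] Hy] // /(congr1 val) /=; try (move=> H; apply: val_inj). Qed.
Definition p231 : 'S_3 := perm f231_inj.
Definition p312 : 'S_3 := perm f312_inj.

Definition c_n (n : nat) (s1 s2 rho : 'S_3) : nat :=
  #|[set pi : 'S_n | [&& avoids pi s1, avoids pi s2 & avoids (pi * pi)%g rho]]|.

From mathcomp Require Import all_boot perm zify.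
Set Implicit Arguments. Unset Strict Implicit. Unset Printing Implicit Defensive.

(* A permutation avoids 231 and 312 exactly when its inversions are convex:
   i < k < j and pi j < pi i force pi j < pi k < pi i.  Equivalently, for i < j
   we have pi j < pi i iff every step between i and j is a descent, so pi is
   determined by its descent set, and it reverses each maximal run of
   consecutive descents.  Every subset of {0, ..., n-2} arises this way, which
   gives 2^(n-1) such permutations; all of them are involutions, and
   pi^2 = 1 avoids any pattern that has an inversion. *)


Definition run (s : pred nat) (i j : nat) : bool := all s (index_iota i j).

Lemma runP (s : pred nat) i j : reflect (forall k, i <= k < j -> s k) (run s i j).
Proof.
by apply: (iffP allP) => hs k; [rewrite -mem_index_iota | rewrite mem_index_iota]; apply: hs.
Qed.

Lemma run_sub (s : pred nat) i j i' j' : i <= i' -> j' <= j -> run s i j -> run s i' j'.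
Proof. by move=> hi hj /runP hs; apply/runP => k hk; apply: hs; lia. Qed.

Lemma run1 (s : pred nat) k : run s k k.+1 = s k.
Proof. by rewrite /run /index_iota subSnn /= andbT. Qed.

(* [s k] means that [k] and [k.+1] lie in the same block; the blocks cut
   [0, N] into intervals, and [flip] reverses each of them. *)
Section Blocks.

Variables (N : nat) (s : pred nat).
Hypothesis s_lt : forall k, s k -> k < N.

Definition starts_block_before i a := (a <= i) && ((a == 0) || ~~ s a.-1).
Definition ends_block_after i b := (i <= b) && ~~ s b.

Fact starts_block_before_ex i : exists a, starts_block_before i a.
Proof. by exists 0; rewrite /starts_block_before leq0n. Qed.

Fact starts_block_before_le i a : starts_block_before i a -> a <= i.
Proof. by case/andP. Qed.

Fact ends_block_after_ex i : exists b, ends_block_after i b.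
Proof.
exists (maxn i N); rewrite /ends_block_after leq_maxl /=.
by apply/negP => /s_lt; rewrite ltnNge leq_maxr.
Qed.

Definition block_start i := ex_maxn (starts_block_before_ex i) (@starts_block_before_le i).
Definition block_end i := ex_minn (ends_block_after_ex i).
Definition flip i := block_start i + block_end i - i.

Lemma block_start_le i : block_start i <= i.
Proof. by rewrite /block_start; case: ex_maxnP => a /andP[]. Qed.

Lemma block_start_boundary i : (block_start i == 0) || ~~ s (block_start i).-1.
Proof. by rewrite /block_start; case: ex_maxnP => a /andP[]. Qed.

Lemma block_start_maximal i a : a <= i -> (a == 0) || ~~ s a.-1 -> a <= block_start i.
Proof.
rewrite /block_start; case: ex_maxnP => b _ bmax hai ha.
by apply: bmax; rewrite /starts_block_before hai.
Qed.

Lemma block_end_ge i : i <= block_end i.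
Proof. by rewrite /block_end; case: ex_minnP => b /andP[]. Qed.

Lemma block_end_boundary i : ~~ s (block_end i).
Proof. by rewrite /block_end; case: ex_minnP => b /andP[]. Qed.

Lemma block_end_minimal i b : i <= b -> ~~ s b -> block_end i <= b.
Proof.
rewrite /block_end; case: ex_minnP => c _ cmin hib hb.
by apply: cmin; rewrite /ends_block_after hib.
Qed.

Lemma block_end_le i : i <= N -> block_end i <= N.
Proof. by move=> hi; apply: block_end_minimal => //; apply/negP => /s_lt; rewrite ltnn. Qed.

Lemma run_block_start i : run s (block_start i) i.
Proof.
apply/runP => k /andP[hk hki]; apply: contraT => /(block_start_maximal hki); lia.
Qed.

Lemma run_block_end i : run s i (block_end i).
Proof.
apply/runP => k /andP[hik hk]; apply: contraT => /(block_end_minimal hik); lia.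
Qed.

Lemma same_block j i : j <= i -> run s j i ->
  block_start j = block_start i /\ block_end j = block_end i.
Proof.
move=> hji /runP hrun; split; apply/eqP; rewrite eqn_leq; apply/andP; split.
- exact: block_start_maximal (leq_trans (block_start_le j) hji) (block_start_boundary j).
- apply: block_start_maximal (block_start_boundary i).
  rewrite leqNgt; apply/negP => hs.
  by move: (block_start_boundary i); rewrite hrun ?orbF; have := block_start_le i; lia.
- exact: block_end_minimal (leq_trans hji (block_end_ge i)) (block_end_boundary i).
- apply: block_end_minimal (block_end_boundary j).
  rewrite leqNgt; apply/negP => he.
  by move: (block_end_boundary j); rewrite hrun //; have := block_end_ge j; lia.
Qed.

Lemma flip_le i : i <= N -> flip i <= N.
Proof. by move=> hi; have := block_end_le hi; have := block_start_le i; rewrite /flip; lia. Qed.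

Lemma flip_same_block i : block_start (flip i) = block_start i /\ block_end (flip i) = block_end i.
Proof.
have hs := block_start_le i; have he := block_end_ge i.
case: (leqP (flip i) i) => hf.
- by apply: same_block hf (run_sub _ _ (run_block_start i)); rewrite /flip; lia.
- have hfe : flip i <= block_end i by rewrite /flip; lia.
  by have [-> ->] := same_block (ltnW hf) (run_sub (leqnn i) hfe (run_block_end i)).
Qed.

Lemma flipK i : flip (flip i) = i.
Proof.
rewrite {1}/flip; case: (flip_same_block i) => -> ->.
by have := block_start_le i; have := block_end_ge i; rewrite /flip; lia.
Qed.

Lemma flip_lt i j : i < j -> (flip j < flip i) = run s i j.
Proof.
move=> hij; case hrun: (run s i j).
  have [es ee] := same_block (ltnW hij) hrun.
  by have := block_end_ge j; rewrite /flip es ee; lia.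
move/negbT/allPn: hrun => [k]; rewrite mem_index_iota => /andP[hik hkj] hk.
have := block_end_minimal hik hk; have := block_start_maximal hkj hk.
by have := block_start_le i; have := block_end_ge j; rewrite /flip; lia.
Qed.

End Blocks.

Lemma descending_chain (g : nat -> nat) i j :
  (forall k, i <= k < j -> g k.+1 < g k) -> i < j -> g j < g i.
Proof.
elim: j => // j IHj hdesc hij.
have hj : g j.+1 < g j by apply: hdesc; lia.
move: hij; rewrite ltnS leq_eqVlt => /predU1P[-> // | hij].
by apply: ltn_trans hj _; apply: IHj hij => k hk; apply: hdesc; lia.
Qed.

Section ConvexInversions.

Variables (N : nat) (g : nat -> nat).
Hypothesis g_convex : forall i k j, i < k -> k < j -> j <= N -> g j < g i -> g j < g k < g i.

Lemma convex_inversion_sub i k l j :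
  i <= k -> k < l -> l <= j -> j <= N -> g j < g i -> g l < g k.
Proof.
move=> hik hkl hlj hjN hgij.
have hgjk : g j < g k.
  move: hik; rewrite leq_eqVlt => /predU1P[<- // | hik].
  by case/andP: (g_convex hik (leq_trans hkl hlj) hjN hgij).
move: hlj; rewrite leq_eqVlt => /predU1P[-> // | hlj].
by case/andP: (g_convex hkl hlj hjN hgjk).
Qed.

Lemma convex_inversionE (s : pred nat) i j :
  (forall k, k < N -> s k = (g k.+1 < g k)) -> i < j -> j <= N -> (g j < g i) = run s i j.
Proof.
move=> hs hij hjN; apply/idP/runP => [hgij k hk | hrun].
- rewrite hs; last lia.
  by apply: convex_inversion_sub hgij; lia.
- apply: descending_chain hij => k hk; rewrite -hs; [exact: hrun | lia].
Qed.

End ConvexInversions.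

Lemma perm_lt_asym n (pi : 'S_n) (i j : 'I_n) : i != j -> (pi j < pi i) = ~~ (pi i < pi j).
Proof. by move=> hij; rewrite ltnNge leq_eqVlt negb_or val_eqE (inj_eq perm_inj) hij. Qed.

Definition o0 : 'I_3 := ord0.
Definition o1 : 'I_3 := @Ordinal 3 1 isT.
Definition o2 : 'I_3 := ord_max.

Lemma ord3_ltP (s t : 'I_3) :
  s < t -> [\/ s = o0 /\ t = o1, s = o0 /\ t = o2 | s = o1 /\ t = o2].
Proof.
by case: s t => [[|[|[|?]]] ?] [[|[|[|?]]] ?] //= _;
  [constructor 1 | constructor 2 | constructor 3]; split; apply: val_inj.
Qed.

Lemma contains3P n (pi : 'S_n) (tau : 'S_3) :
  reflect (exists i j k : 'I_n,
             [/\ i < j, j < k, (pi j < pi i) = (tau o1 < tau o0),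
                 (pi k < pi i) = (tau o2 < tau o0) & (pi k < pi j) = (tau o2 < tau o1)])
          (contains pi tau).
Proof.
apply: (iffP existsP) => [[idx /forallP hidx] | [i [j [k [hij hjk h01 h02 h12]]]]].
- have hlt (s t : 'I_3) :
      s < t -> (idx s < idx t) && ((pi (idx t) < pi (idx s)) == (tau t < tau s)).
    exact: implyP (forallP (hidx s) t).
  case/andP: (hlt o0 o1 isT) => h01 /eqP e01; case/andP: (hlt o0 o2 isT) => _ /eqP e02.
  case/andP: (hlt o1 o2 isT) => h12 /eqP e12.
  by exists (idx o0), (idx o1), (idx o2).
- exists [ffun t : 'I_3 => match val t with 0 => i | 1 => j | _ => k end].
  apply/forallP => s; apply/forallP => t; apply/implyP.
  case/ord3_ltP => -[-> ->]; rewrite !ffunE /=.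
  - by rewrite hij h01 eqxx.
  - by rewrite (ltn_trans hij hjk) h02 eqxx.
  - by rewrite hjk h12 eqxx.
Qed.

Definition inversions_convex n (pi : 'S_n) :=
  forall i k j : 'I_n, i < k -> k < j -> pi j < pi i -> pi j < pi k < pi i.

Lemma p231_lt : [/\ (p231 o1 < p231 o0) = false, p231 o2 < p231 o0 & p231 o2 < p231 o1].
Proof. by rewrite !permE. Qed.

Lemma p312_lt : [/\ p312 o1 < p312 o0, p312 o2 < p312 o0 & (p312 o2 < p312 o1) = false].
Proof. by rewrite !permE. Qed.

Lemma avoids231_312P n (pi : 'S_n) : avoids pi p231 && avoids pi p312 <-> inversions_convex pi.
Proof.
have [t01 t02 t12] := p231_lt; have [u01 u02 u12] := p312_lt.
split.
- case/andP => /contains3P h231 /contains3P h312 i k j hik hkj hji.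
  have nik : i != k by rewrite -val_eqE neq_ltn hik.
  have nkj : k != j by rewrite -val_eqE neq_ltn hkj.
  apply/andP; split; apply: contraT; rewrite -perm_lt_asym 1?eq_sym // => hlt.
  + case: h312; exists i, k, j.
    by rewrite u01 u02 u12 hik hkj hji (ltn_trans hlt hji) ltnNge (ltnW hlt).
  + case: h231; exists i, k, j.
    by rewrite t01 t02 t12 hik hkj hji (ltn_trans hji hlt) ltnNge (ltnW hlt).
- move=> hconv; apply/andP; split; apply/negP => /contains3P [i [j [k [hij hjk]]]].
  + rewrite t01 t02 t12 => e01 e02 e12.
    by case/andP: (hconv i j k hij hjk e02) => _; rewrite e01.
  + rewrite u01 u02 u12 => e01 e02 e12.
    by case/andP: (hconv i j k hij hjk e02); rewrite e12.
Qed.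

Definition layered n (pi : 'S_n) (s : pred nat) :=
  forall i j : 'I_n, i < j -> (pi j < pi i) = run s i j.

Lemma layered_convex n (pi : 'S_n) s : layered pi s -> inversions_convex pi.
Proof.
move=> hpi i k j hik hkj; rewrite !hpi ?(ltn_trans hik hkj) // => hrun.
by rewrite (run_sub _ _ hrun) ?(run_sub _ _ hrun) // ltnW.
Qed.

Lemma card_ord_lt n (v : 'I_n) : #|[set x : 'I_n | x < v]| = v.
Proof.
have -> : [set x : 'I_n | x < v] = [set widen_ord (ltnW (ltn_ord v)) y | y : 'I_v].
  apply/setP => x; rewrite inE; apply/idP/imsetP => [hx | [y _ ->]].
  - by exists (Ordinal hx) => //; apply: val_inj.
  - exact: ltn_ord y.
by rewrite card_imset ?card_ord // => y z /(congr1 val) /= /val_inj.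
Qed.

Lemma perm_rank n (pi : 'S_n) i : pi i = #|[set j | pi j < pi i]| :> nat.
Proof.
have -> : [set j | pi j < pi i] = pi @^-1: [set x : 'I_n | x < pi i].
  by apply/setP => j; rewrite !inE.
by rewrite card_preimset ?card_ord_lt //; apply: perm_inj.
Qed.

Lemma layered_uniq n (pi sigma : 'S_n) s : layered pi s -> layered sigma s -> pi = sigma.
Proof.
move=> hpi hsigma.
have same_lt i j : (pi j < pi i) = (sigma j < sigma i).
  case: (ltngtP i j) => [hij | hji | /val_inj ->].
  - by rewrite (hpi i j hij) (hsigma i j hij).
  - have nij : i != j by rewrite -val_eqE neq_ltn hji orbT.
    by rewrite (perm_lt_asym pi nij) (perm_lt_asym sigma nij) (hpi j i hji) (hsigma j i hji).
  - by rewrite !ltnn.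
apply/permP => i; apply: val_inj; rewrite /= (perm_rank pi) (perm_rank sigma).
by apply: eq_card => j; rewrite !inE same_lt.
Qed.

Section LayeredPerm.

Variables (N : nat) (D : {set 'I_N}).

Definition natset : pred nat := fun k => [exists d in D, val d == k].

Lemma natset_lt k : natset k -> k < N.
Proof. by rewrite /natset => /existsP[d /andP[_ /eqP <-]]; apply: ltn_ord. Qed.

Lemma natsetE (d : 'I_N) : natset d = (d \in D).
Proof.
rewrite /natset; apply/existsP/idP => [[e /andP[eD /eqP /val_inj <-]] // | dD].
by exists d; rewrite dD eqxx.
Qed.

Let flip_ord (i : 'I_N.+1) : flip natset_lt i < N.+1 := flip_le natset_lt (ltn_ord i).

Fact flip_perm_subproof : injective (fun i : 'I_N.+1 => inord (flip natset_lt i) : 'I_N.+1).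
Proof.
move=> i j /(congr1 val) /=; rewrite !inordK // => e.
by apply: val_inj => /=; rewrite -(flipK natset_lt i) e flipK.
Qed.

Definition flip_perm : 'S_N.+1 := perm flip_perm_subproof.

Lemma flip_permE i : flip_perm i = flip natset_lt i :> nat.
Proof. by rewrite permE inordK. Qed.

Lemma layered_flip_perm : layered flip_perm natset.
Proof. by move=> i j hij; rewrite !flip_permE flip_lt. Qed.

Lemma flip_permK : (flip_perm * flip_perm = 1)%g.
Proof.
by apply/permP => i; rewrite permM perm1; apply: val_inj => /=; rewrite !flip_permE flipK.
Qed.

End LayeredPerm.

Definition descents N (pi : 'S_N.+1) : {set 'I_N} :=
  [set k : 'I_N | pi (lift ord0 k) < pi (widen_ord (leqnSn N) k)].

Lemma layered_descents N (pi : 'S_N.+1) (D : {set 'I_N}) : layered pi (natset D) -> descents pi = D.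
Proof.
move=> hpi; apply/setP => k; rewrite inE hpi; last by rewrite lift0.
by rewrite lift0 run1 natsetE.
Qed.

Lemma avoids_layered N (pi : 'S_N.+1) :
  avoids pi p231 && avoids pi p312 -> layered pi (natset (descents pi)).
Proof.
move/avoids231_312P => hconv i j hij.
pose g x := val (pi (inord x)).
have gE (x : 'I_N.+1) : g x = pi x by rewrite /g inord_val.
rewrite -!gE; apply: (convex_inversionE (N := N)) => //; last by rewrite -ltnS.
- move=> a b c hab hbc hcN; rewrite /g; apply: hconv; rewrite !inordK //; lia.
- move=> k hk; rewrite -[k]/(val (Ordinal hk)) natsetE inE /g.
  by congr (val (pi _) < val (pi _)); apply: val_inj; rewrite /= ?lift0 inordK //; lia.
Qed.

Lemma avoids231_312_involutive N (pi : 'S_N.+1) :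
  avoids pi p231 && avoids pi p312 -> (pi * pi = 1)%g.
Proof.
move=> hpi; rewrite (layered_uniq (avoids_layered hpi) (layered_flip_perm _)).
exact: flip_permK.
Qed.

Lemma card_avoids231_312 N : #|[set pi : 'S_N.+1 | avoids pi p231 && avoids pi p312]| = 2 ^ N.
Proof.
have -> : [set pi : 'S_N.+1 | avoids pi p231 && avoids pi p312] =
          [set flip_perm D | D : {set 'I_N}].
  apply/setP => pi; rewrite inE; apply/idP/imsetP => [hpi | [D _ ->]].
  - by exists (descents pi) => //; apply: layered_uniq (avoids_layered hpi) (layered_flip_perm _).
  - exact/avoids231_312P/layered_convex/layered_flip_perm.
rewrite card_imset; last exact: can_inj (fun D => layered_descents (layered_flip_perm D)).
by rewrite -cardsT -powersetT card_powerset cardsT card_ord.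
Qed.

Lemma perm1_avoids n k (tau : 'S_k) (s t : 'I_k) :
  s < t -> tau t < tau s -> avoids (1%g : 'S_n) tau.
Proof.
move=> hst htau; apply/existsP => -[idx /forallP hidx].
case/andP: (implyP (forallP (hidx s) t) hst) => hidx_st.
by rewrite !perm1 htau => /eqP; rewrite ltnNge ltnW.
Qed.

Theorem theorem3p4 (n : nat) (hn : 1 <= n) :
  c_n n p231 p312 p231 = 2 ^ n.-1 /\ c_n n p312 p231 p312 = 2 ^ n.-1.
Proof.
case: n hn => // N _; rewrite /= -(card_avoids231_312 N).
have [_ t02 _] := p231_lt; have [_ u02 _] := p312_lt.
have sq_avoids (pi : 'S_N.+1) (tau : 'S_3) :
    tau o2 < tau o0 -> avoids pi p231 && avoids pi p312 -> avoids (pi * pi)%g tau.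
  by move=> htau /avoids231_312_involutive ->; exact: perm1_avoids _ (isT : o0 < o2) htau.
split; apply: eq_card => pi; rewrite !inE andbA; [|rewrite (andbC (avoids pi p312))].
- by case hpi: (avoids pi p231 && avoids pi p312) => //=; apply: sq_avoids t02 hpi.
- by case hpi: (avoids pi p231 && avoids pi p312) => //=; apply: sq_avoids u02 hpi.
Qed.
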